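(* Fix test functions $h_n\in\mathsf F(\mathcal X_n)$, $n\in\mathbb N$, and let $(\lambda_n)_{n\in\mathbb N}$ be the lags produced by the ALVar procedure (with ties in the argmax broken in favour of the largest maximiser). Then for every $n\in\mathbb N$ with $\lambda_n<n$: none of the Enoch index sets $(E^i_{m,n})_{i=1}^N$, $m\in\llbracket n-\lambda_n,n\rrbracket$, is depleted, whereas all the Enoch index sets $(E^i_{m,n})_{i=1}^N$, $m\in\llbracket 0,n-\lambda_n-1\rrbracket$, are depleted.
   Context: Notation: $\mathbb N=\{0,1,2,\dots\}$, $\mathbb N^*=\mathbb N\setminus\{0\}$; $\llbracket m,n\rrbracket=\{k\in\mathbb N: m\le k\le n\}$; $\mathsf F(\mathcal X)$ denotes the set of bounded measurable real functions on $(\mathsf X,\mathcal X)$. Setting: $(\mathsf X_n,\mathcal X_n)_{n\in\mathbb N}$ are measurable spaces; $\nu$ is a probability measure on $\mathcal X_0$; $w_{-1}:\mathsf X_0\to\mathbb R_+$ measurable; $\vartheta_n:\mathsf X_n\to(0,\infty)$ measurable; $P_n$ Markov kernels from $\mathsf X_n$ to $\mathcal X_{n+1}$; $w_n:\mathsf X_n\times\mathsf X_{n+1}\to\mathbb R_+$ measurable. Auxiliary particle filter (APF) with $N\in\mathbb N^*$ particles: draw $\xi_0^1,\dots,\xi_0^N$ i.i.d. from $\nu$ and set $\omega_0^i=w_{-1}(\xi_0^i)$; given $(\xi_n^i,\omega_n^i)_{i=1}^N$, for each $i\in\llbracket1,N\rrbracket$, conditionally independently, draw $I_{n+1}^i\in\llbracket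 1,N\rrbracket$ with probability $\omega_n^j\vartheta_n(\xi_n^j)/\sum_{\ell}\omega_n^\ell\vartheta_n(\xi_n^\ell)$ of being $j$, then $\xi_{n+1}^i\sim P_n(\xi_n^{I_{n+1}^i},\cdot)$, and set $\omega_{n+1}^i=w_n(\xi_n^{I_{n+1}^i},\xi_{n+1}^i)/\vartheta_n(\xi_n^{I_{n+1}^i})$. Let $\Omega_n=\sum_i\omega_n^i$ and $\eta_n^Nh=\sum_{i=1}^N\omega_n^ih(\xi_n^i)/\Omega_n$. Enoch indices and fixed-lag estimator: define $E^i_{n,n}=i$ for all $n$ and $i$, and recursively $E^i_{m,n+1}=E^{I^i_{n+1}}_{m,n}$ for $m\le n$ (so $E^i_{m,n}$ is the index of the time-$m$ ancestor of particle $i$ at time $n$). For $\lambda\in\mathbb N$ let $n\langle\lambda\rangle=(n-\lambda)\vee0$ and $$\hat\sigma^2_{n,\lambda}(h)=N\sum_{i=1}^N\Big(\sum_{j:\,E^j_{n\langle\lambda\rangle,n}=i}\frac{\omega_n^j}{\Omega_n}\{h(\xi_n^j)-\eta_n^Nh\}\Big)^2.$$ ALVar procedure: given test functions $h_n\in\mathsf F(\mathcal X_n)$, set $\lambda_0=0$ and, for $n\ge0$, $\lambda_{n+1}=\operatorname{argmax}_{\lambda\in\llbracket0,\lambda_n+1\rrbracket}\hat\sigma^2_{n+1,\lambda}(h_{n+1})$ (largest maximiser in case of ties). The ALVar estimate at time $n$ is $\hat\sigma^2_{n,\lambda_n}(h_n)$. Depletion (defined recursively, with respect to the fixed sequence $(h_n)$):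 for $n\in\mathbb N$ the set $(E^i_{n,n})_{i=1}^N$ is never depleted, and the (formal) set $(E^i_{-1,n})_{i=1}^N$ is always depleted. For $0\le m<n$, $(E^i_{m,n})_{i=1}^N$ is depleted iff (i) $(E^i_{m,n-1})_{i=1}^N$ is depleted, or (ii) $(E^i_{m-1,n})_{i=1}^N$ is depleted and, with $\lambda=n-m$, there exists $\lambda'\in\llbracket0,\lambda-1\rrbracket$ with $\hat\sigma^2_{n,\lambda}(h_n)<\hat\sigma^2_{n,\lambda'}(h_n)$. *)

From HB Require Import structures.
From mathcomp Require Import all_boot all_order all_algebra.
From mathcomp Require Import all_classical all_reals all_analysis.
Set Implicit Arguments. Unset Strict Implicit. Unset Printing Implicit Defensive.
Import Order.TTheory GRing.Theory Num.Theory.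
Local Open Scope ring_scope.

(* Particle indices 1..N of the paper are represented by 'I_N = {0,..,N-1}. *)

Section APF.
Variable R : realType.
Variable X : nat -> Type.
Variable N : nat.
Variable xi : forall n, 'I_N -> X n.
Variable omega : nat -> 'I_N -> R.
Variable I : nat -> 'I_N -> 'I_N.
Variable h : forall n, X n -> R.

Definition Omega (n : nat) : R := \sum_(i < N) omega n i.

Definition etaN (n : nat) : R := \sum_(i < N) omega n i * h (xi n i) / Omega n.

(* Enoch indices: enoch m n i = E^i_{m,n} (meaningful for m <= n):
   E^i_{n,n} = i and E^i_{m,n+1} = E^{I^i_{n+1}}_{m,n} for m <= n. *)
Fixpoint enoch (m n : nat) (i : 'I_N) {struct n} : 'I_N :=
  match n with
  | 0 => i
  | n'.+1 => if (m <= n')%N then enoch m n' (I n'.+1 i) else i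
  end.

(* n<lambda> = (n - lambda) v 0, i.e. truncated subtraction on nat *)
Definition lagidx (n lam : nat) : nat := (n - lam)%N.

Definition sigma2 (n lam : nat) : R :=
  N%:R * \sum_(i < N)
    (\sum_(j < N | enoch (lagidx n lam) n j == i)
        (omega n j / Omega n) * (h (xi n j) - etaN n)) ^+ 2.

End APF.

Definition is_largest_argmax (R : realType) (f : nat -> R) (k a : nat) : Prop :=
  [/\ (a <= k)%N,
      (forall l, (l <= k)%N -> f l <= f a) &
      (forall l, (l <= k)%N -> f l = f a -> (l <= a)%N)].

(* Depletion, relative to a family s n lam = hat sigma^2_{n,lam}(h_n).
   depl s n k encodes "(E^i_{k-1,n})_i is depleted", so k = 0 encodes the
   formal index m = -1 (always depleted).  For m = n: not depleted.
   For 0 <= m < n: (i) depleted at (m, n-1), or (ii) depleted at (m-1, n)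
   and some lambda' < lambda := n - m has s n lambda < s n lambda'. *)
Fixpoint depl (R : realType) (s : nat -> nat -> R) (n : nat) : nat -> bool :=
  match n with
  | 0 => fun k => k == 0%N
  | n'.+1 =>
      fix dk (k : nat) : bool :=
        match k with
        | 0 => true
        | k'.+1 =>
            (k' < n'.+1)%N &&
            (depl s n' k'.+1 ||
             (dk k' && [exists l' : 'I_(n'.+1 - k'),
                          s n'.+1 (n'.+1 - k')%N < s n'.+1 (nat_of_ord l')]))
        end
  end.

Definition depleted (R : realType) (s : nat -> nat -> R) (n m : nat) : bool :=
  depl s n m.+1.

From HB Require Import structures.
From mathcomp Require Import all_boot all_order all_algebra.
From mathcomp Require Import all_classical all_reals all_analysis.
From mathcomp Require Import zify.
Import Order.TTheory GRing.Theory Num.Theory.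
Local Open Scope ring_scope.

(* Only the argmax rule matters, not the particles: by induction on n, the
   set at time m is depleted at time n exactly when m < n - lam n.  Going from
   n to n+1, a lag lam <= lam n + 1 is beaten by some smaller lag iff the
   largest maximiser lam (n+1) lies strictly below lam, and the recursion only
   asks this question for lags not already excluded at time n. *)

Lemma largest_argmax_beatenE {R : realType} {f : nat -> R} {k a lam : nat} :
  is_largest_argmax f k a -> (lam <= k)%N ->
  (a <= lam)%N && [exists l : 'I_lam, f lam < f l] = (a < lam)%N.
Proof.
move=> [a_le_k f_le_fa largest] lam_le_k.
have [a_lt_lam | lam_le_a] := ltnP a lam.
  rewrite ltnW //=; apply/existsP; exists (Ordinal a_lt_lam) => /=.
  rewrite lt_def f_le_fa // andbT; apply/eqP => f_eq.
  by have := largest lam lam_le_k (esym f_eq); rewrite leqNgt a_lt_lam.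
apply/negbTE/andP => -[a_le_lam /existsP [l]].
have a_eq_lam : a = lam by apply/eqP; rewrite eqn_leq a_le_lam.
have := f_le_fa l (leq_trans (ltnW (ltn_ord l)) lam_le_k).
by rewrite a_eq_lam leNgt => /negP.
Qed.

Lemma depl_succ (R : realType) (s : nat -> nat -> R) (n k : nat) :
  depl s n.+1 k.+1 = (k < n.+1)%N && (depl s n k.+1 ||
     (depl s n.+1 k &&
      [exists l : 'I_(n.+1 - k), s n.+1 (n.+1 - k)%N < s n.+1 l])).
Proof. by case: k. Qed.

Section ArgmaxLags.
Variables (R : realType) (s : nat -> nat -> R) (lam : nat -> nat).
Hypothesis lam0 : lam 0%N = 0%N.
Hypothesis lamS : forall n, is_largest_argmax (s n.+1) (lam n).+1 (lam n.+1).

Lemma lag_le n : (lam n <= n)%N.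
Proof.
elim: n => [|n IHn]; first by rewrite lam0.
by have [lam_le _ _] := lamS n; apply: leq_trans lam_le _.
Qed.

Lemma deplE n k : depl s n k = (k <= n - lam n)%N.
Proof.
elim: n k => [|n IHn] k; first by rewrite lam0 leqn0.
have lagS_le := lag_le n.+1; have [lagS_le_succ _ _] := lamS n.
elim: k => [|m IHm] //; rewrite depl_succ IHn IHm.
have [m_le_n | m_gt_n] := ltnP m n.+1; last by apply/esym/negbTE; lia.
have [m_small | m_large] := ltnP m (n - lam n).
  by rewrite orTb; apply/esym; lia.
have lam_le_k : (n.+1 - m <= (lam n).+1)%N by lia.
have := largest_argmax_beatenE (lamS n) lam_le_k.
have -> : (m <= n.+1 - lam n.+1)%N = (lam n.+1 <= n.+1 - m)%N by lia.
by move=> ->; apply/idP/idP; lia.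
Qed.

End ArgmaxLags.

Theorem theorem3p1
  (R : realType) (d : nat -> measure_display) (X : forall n, measurableType (d n))
  (N : nat) (HN : (0 < N)%N)
  (w_init : X 0%N -> R) (theta : forall n, X n -> R)
  (w : forall n, X n * X n.+1 -> R)
  (Hw_init : measurable_fun setT w_init /\ forall x, 0 <= w_init x)
  (Htheta : forall n, measurable_fun setT (theta n) /\ forall x, 0 < theta n x)
  (Hw : forall n, measurable_fun setT (w n) /\ forall p, 0 <= w n p)
  (h : forall n, X n -> R)
  (Hh : forall n, measurable_fun setT (h n) /\ exists M : R, forall x, `|h n x| <= M)
  (xi : forall n, 'I_N -> X n) (omega : nat -> 'I_N -> R) (I : nat -> 'I_N -> 'I_N)
  (Homega0 : forall i, omega 0%N i = w_init (xi 0%N i))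
  (HomegaS : forall n i, omega n.+1 i =
       w n (xi n (I n.+1 i), xi n.+1 i) / theta n (xi n (I n.+1 i)))
  (lam : nat -> nat)
  (Hlam0 : lam 0%N = 0%N)
  (HlamS : forall n, is_largest_argmax (sigma2 xi omega I h n.+1) (lam n).+1 (lam n.+1)) :
  forall n : nat, (lam n < n)%N ->
    (forall m : nat, (n - lam n <= m <= n)%N ->
        ~~ depleted (sigma2 xi omega I h) n m) /\
    (forall m : nat, (m <= n - lam n - 1)%N ->
        depleted (sigma2 xi omega I h) n m).
Proof.
move=> n lag_lt_n; rewrite /depleted.
by split=> m m_range; rewrite (deplE _ _ _ Hlam0 HlamS); lia.
Qed.
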